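(* There is a unique $q_0\approx0.989681$ such that $\delta(q)>0$ for $q>q_0$ and $\delta(q)<0$ for $q<q_0$.
   Context: For $q\in\mathbb{R}$ define $\delta(q)=\frac{1-(2/\pi)^{3q-8/5}}{3q-8/5}-\frac1{3q}$ if $q>0$, $q\ne\frac8{15}$; $\delta(\frac8{15})=-\ln\frac2\pi-\frac58$; and $\delta(q)=-\infty$ if $q\le0$. (This is the limit as $x\to\pi/2^-$ of $\frac{U_{3q-8/5}(\sin x/x)}{U_q(\cos x)}-\frac13$, where $U_p(s)=\frac{1-s^p}{p}$, $U_0(s)=-\ln s$.) *)

From Stdlib Require Import Reals.
From Coquelicot Require Import Coquelicot.
Open Scope R_scope.

Definition delta (q : R) : Rbar :=
  if Rle_dec q 0 then m_infty
  else if Req_EM_T q (8/15) then Finite (- ln (2 / PI) - 5/8)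
  else Finite ((1 - Rpower (2 / PI) (3*q - 8/5)) / (3*q - 8/5) - 1 / (3*q)).

(* With a = ln(pi/2) and p = 3q - 8/5 one has (2/pi)^p = exp(-ap), so for q > 0, q <> 8/15,
     delta(q) = (8/5) (exp(ap) - 1 - 5p/8) / (exp(ap) p 3q).
   The convex function exp(ap) - 1 - 5p/8 vanishes at p = 0 with slope a - 5/8 < 0, hence has
   exactly one further zero p0 > 0: it is positive for p < 0 and p > p0, negative in between.
   So delta < 0 below q0 = (p0 + 8/5)/3 and delta > 0 above it. The sign analysis is done on
   ap - ln(1 + 5p/8), which has the same sign and a single critical point; p0 is trapped in
   (1.3690415, 1.3690445) by the intermediate value theorem, using Machin-like bounds for pi and
   Taylor bounds for exp. *)

From Stdlib Require Import Reals Lra Ranalysis5 Machin.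
From Coquelicot Require Import Coquelicot.
Open Scope R_scope.

Section LinearMinusLog.

Variables a c : R.
Hypothesis a_pos : 0 < a.
Hypothesis a_lt_c : a < c.

Definition gap (p : R) : R := a * p - ln (1 + c * p).

Definition gap_crit : R := / a - / c.

Lemma one_add_mul_pos p : - / c < p -> 0 < 1 + c * p.
Proof.
intros Hp.
assert (Hc : c * / c = 1) by (field; lra).
nra.
Qed.

Lemma gap_crit_pos : 0 < gap_crit.
Proof.
unfold gap_crit; apply Rlt_0_minus, Rinv_lt_contravar; nra.
Qed.

Lemma gap_0 : gap 0 = 0.
Proof. unfold gap; rewrite !Rmult_0_r, Rplus_0_r, ln_1; ring. Qed.

Lemma gap_derive p :
  - / c < p -> derivable_pt_lim gap p (a * c * (p - gap_crit) / (1 + c * p)).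
Proof.
intros Hp; pose proof (one_add_mul_pos p Hp) as Hpos.
apply is_derive_Reals; unfold gap, gap_crit.
auto_derive; [lra|].
field; repeat split; lra.
Qed.

Lemma gap_mvt x y :
  - / c < x -> x < y ->
  exists z, x < z < y /\ gap y - gap x = a * c * (z - gap_crit) / (1 + c * z) * (y - x).
Proof.
intros Hx Hxy.
destruct (MVT_cor2 gap (fun z => a * c * (z - gap_crit) / (1 + c * z)) x y Hxy)
  as [z [Ez Hz]].
- intros z Hz; apply gap_derive; lra.
- exists z; split; assumption.
Qed.

Lemma gap_decreasing x y : - / c < x -> x < y -> y <= gap_crit -> gap y < gap x.
Proof.
intros Hx Hxy Hy.
destruct (gap_mvt x y Hx Hxy) as [z [Hz Ez]].
assert (Hslope : a * c * (z - gap_crit) / (1 + c * z) < 0).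
{ apply Rdiv_neg_pos; [|apply one_add_mul_pos; lra].
  assert (0 < a * c) by nra; nra. }
nra.
Qed.

Lemma gap_increasing x y : gap_crit <= x -> x < y -> gap x < gap y.
Proof.
intros Hx Hxy.
assert (Hxc : - / c < x).
{ pose proof gap_crit_pos; assert (0 < / c) by (apply Rinv_0_lt_compat; lra); lra. }
destruct (gap_mvt x y Hxc Hxy) as [z [Hz Ez]].
assert (Hslope : 0 < a * c * (z - gap_crit) / (1 + c * z)).
{ apply Rdiv_lt_0_compat; [|apply one_add_mul_pos; lra].
  assert (0 < a * c) by nra; nra. }
nra.
Qed.

Lemma gap_pos_of_neg p : - / c < p < 0 -> 0 < gap p.
Proof.
intros Hp; rewrite <- gap_0.
pose proof gap_crit_pos; apply gap_decreasing; lra.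
Qed.

Lemma gap_neg_of_le_crit p : 0 < p <= gap_crit -> gap p < 0.
Proof.
intros Hp; rewrite <- gap_0.
assert (0 < / c) by (apply Rinv_0_lt_compat; lra).
apply gap_decreasing; lra.
Qed.

Section PositiveRoot.

Variable p0 : R.
Hypothesis p0_pos : 0 < p0.
Hypothesis gap_p0 : gap p0 = 0.

Lemma gap_crit_lt_root : gap_crit < p0.
Proof.
destruct (Rlt_le_dec gap_crit p0) as [H|H]; [exact H|].
pose proof (gap_neg_of_le_crit p0); lra.
Qed.

Lemma gap_neg_below_root p : 0 < p < p0 -> gap p < 0.
Proof.
intros Hp; destruct (Rle_lt_dec p gap_crit).
- apply gap_neg_of_le_crit; lra.
- rewrite <- gap_p0; apply gap_increasing; lra.
Qed.

Lemma gap_pos_above_root p : p0 < p -> 0 < gap p.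
Proof.
intros Hp; rewrite <- gap_p0.
pose proof gap_crit_lt_root; apply gap_increasing; lra.
Qed.

End PositiveRoot.

Lemma gap_pos_iff p : - / c < p -> 0 < gap p <-> 1 + c * p < exp (a * p).
Proof.
intros Hp; pose proof (one_add_mul_pos p Hp) as Hpos; unfold gap; split; intros H.
- rewrite <- (exp_ln (1 + c * p)) by assumption; apply exp_increasing; lra.
- assert (Hln : ln (1 + c * p) < ln (exp (a * p))) by (apply ln_increasing; assumption).
  rewrite ln_exp in Hln; lra.
Qed.

Lemma gap_neg_iff p : - / c < p -> gap p < 0 <-> exp (a * p) < 1 + c * p.
Proof.
intros Hp; pose proof (one_add_mul_pos p Hp) as Hpos; unfold gap; split; intros H.
- rewrite <- (exp_ln (1 + c * p)) by assumption; apply exp_increasing; lra.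
- assert (Hln : ln (exp (a * p)) < ln (1 + c * p)) by (apply ln_increasing; [apply exp_pos|assumption]).
  rewrite ln_exp in Hln; lra.
Qed.

End LinearMinusLog.

Lemma PI_bounds : 314159265 / 100000000 <= PI <= 314159266 / 100000000.
Proof.
pose proof (PI_2_3_7_ineq 6) as [Hlo Hhi].
unfold tg_alt, PI_2_3_7_tg, Ratan_seq in Hlo, Hhi; simpl in Hlo, Hhi.
lra.
Qed.

Lemma Derive_n_exp k t : Derive_n exp k t = exp t.
Proof.
revert t; induction k as [|k IH]; intros t; [reflexivity|].
simpl; rewrite (Derive_ext _ _ t IH).
apply is_derive_unique, is_derive_Reals, derivable_pt_lim_exp.
Qed.

Definition exp_poly (n : nat) (y : R) : R :=
  sum_f_R0 (fun m => y ^ m / INR (Factorial.fact m)) n.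

Lemma exp_taylor_bounds n y :
  0 < y ->
  exp_poly n y <= exp y /\
  exp y <= exp_poly n y + y ^ S n / INR (Factorial.fact (S n)) * exp y.
Proof.
intros Hy.
destruct (Taylor_Lagrange exp n 0 y Hy) as [z [Hz E]].
{ intros t _ [|k] _; [exact I|].
  apply (ex_derive_ext exp); [intros s; symmetry; apply Derive_n_exp|].
  exists (exp t); apply is_derive_Reals, derivable_pt_lim_exp. }
rewrite Derive_n_exp, Rminus_0_r in E.
replace (sum_f_R0 _ n) with (exp_poly n y) in E.
2:{ unfold exp_poly; apply sum_eq; intros m _.
    rewrite Derive_n_exp, exp_0; ring. }
assert (Hrem : 0 < y ^ S n / INR (Factorial.fact (S n))).
{ apply Rdiv_lt_0_compat; [apply pow_lt; lra|].
  apply lt_0_INR, Factorial.lt_O_fact. }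
assert (exp z < exp y) by (apply exp_increasing; lra).
pose proof (exp_pos z).
split; nra.
Qed.

Lemma exp_poly_le_exp n y : 0 < y -> exp_poly n y <= exp y.
Proof. intros Hy; apply exp_taylor_bounds, Hy. Qed.

Lemma exp_le_exp_poly n y :
  0 < y -> y ^ S n / INR (Factorial.fact (S n)) < 1 ->
  exp y <= exp_poly n y / (1 - y ^ S n / INR (Factorial.fact (S n))).
Proof.
intros Hy Hrem; destruct (exp_taylor_bounds n y Hy) as [_ Hhi].
apply Rle_div_r; [lra|]; nra.
Qed.

Ltac eval_exp_poly :=
  unfold exp_poly; cbn [sum_f_R0]; rewrite ?fact_simpl, ?mult_INR;
  cbn [Factorial.fact]; rewrite ?INR_IZR_INZ;
  cbn [Z.of_nat Pos.of_succ_nat Pos.succ pow].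

Definition ln_half_pi : R := ln (PI / 2).

Lemma ln_half_pi_bounds : 45158270 / 100000000 < ln_half_pi < 45158271 / 100000000.
Proof.
pose proof PI_bounds; unfold ln_half_pi; split.
- rewrite <- (ln_exp (45158270 / 100000000)).
  apply ln_increasing; [apply exp_pos|].
  eapply Rle_lt_trans; [apply (exp_le_exp_poly 11); [lra|eval_exp_poly; lra]|].
  eval_exp_poly; lra.
- rewrite <- (ln_exp (45158271 / 100000000)).
  apply ln_increasing; [lra|].
  eapply Rlt_le_trans; [|apply (exp_poly_le_exp 11); lra].
  eval_exp_poly; lra.
Qed.

Lemma ln_half_pi_pos : 0 < ln_half_pi.
Proof. pose proof ln_half_pi_bounds; lra. Qed.

Lemma ln_half_pi_lt : ln_half_pi < 5 / 8.
Proof. pose proof ln_half_pi_bounds; lra. Qed.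

Notation gap_half_pi := (gap ln_half_pi (5 / 8)).

Lemma gap_half_pi_lower : gap_half_pi (13690415 / 10000000) < 0.
Proof.
pose proof ln_half_pi_bounds.
apply (gap_neg_iff _ _ ln_half_pi_pos ln_half_pi_lt); [lra|].
apply Rlt_trans with (exp (45158271 / 100000000 * (13690415 / 10000000))).
{ apply exp_increasing; nra. }
eapply Rle_lt_trans; [apply (exp_le_exp_poly 11); [lra|eval_exp_poly; lra]|].
eval_exp_poly; lra.
Qed.

Lemma gap_half_pi_upper : 0 < gap_half_pi (13690445 / 10000000).
Proof.
pose proof ln_half_pi_bounds.
apply (gap_pos_iff _ _ ln_half_pi_pos ln_half_pi_lt); [lra|].
apply Rlt_trans with (exp (45158270 / 100000000 * (13690445 / 10000000))).
2:{ apply exp_increasing; nra. }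
eapply Rlt_le_trans; [|apply (exp_poly_le_exp 11); lra].
eval_exp_poly; lra.
Qed.

Lemma gap_half_pi_root :
  { p0 | 13690415 / 10000000 < p0 < 13690445 / 10000000 /\ gap_half_pi p0 = 0 }.
Proof.
pose proof gap_half_pi_lower; pose proof gap_half_pi_upper.
destruct (IVT_interv gap_half_pi (13690415 / 10000000) (13690445 / 10000000))
  as [p0 [Hp0 E]]; try lra.
- intros p Hp; apply derivable_continuous_pt.
  eexists; apply (gap_derive _ _ ln_half_pi_pos ln_half_pi_lt); lra.
- exists p0; split; [|exact E].
  destruct Hp0 as [[H1|H1] [H2|H2]]; subst; lra.
Qed.

Lemma Rpower_two_over_pi p : Rpower (2 / PI) p = / exp (ln_half_pi * p).
Proof.
pose proof PI_bounds; unfold Rpower, ln_half_pi.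
replace (2 / PI) with (/ (PI / 2)) by (field; lra).
rewrite ln_Rinv, <- exp_Ropp by lra.
f_equal; ring.
Qed.

Lemma delta_eq q :
  0 < q -> q <> 8 / 15 ->
  delta q = Finite (8 / 5 * (exp (ln_half_pi * (3 * q - 8 / 5)) - (1 + 5 / 8 * (3 * q - 8 / 5)))
                    / (exp (ln_half_pi * (3 * q - 8 / 5)) * (3 * q - 8 / 5) * (3 * q))).
Proof.
intros Hq Hq8; unfold delta.
destruct (Rle_dec q 0); [lra|]; destruct (Req_EM_T q (8 / 15)); [lra|].
f_equal; rewrite Rpower_two_over_pi.
pose proof (exp_pos (ln_half_pi * (3 * q - 8 / 5))).
field; repeat split; lra.
Qed.

Lemma delta_8_15 : delta (8 / 15) = Finite (ln_half_pi - 5 / 8).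
Proof.
pose proof PI_bounds; unfold delta, ln_half_pi.
destruct (Rle_dec (8 / 15) 0); [lra|]; destruct (Req_EM_T (8 / 15) (8 / 15)); [|lra].
replace (2 / PI) with (/ (PI / 2)) by (field; lra).
rewrite ln_Rinv by lra; f_equal; ring.
Qed.

Section DeltaSign.

Variable p0 : R.
Hypothesis p0_pos : 0 < p0.
Hypothesis gap_p0 : gap_half_pi p0 = 0.

Lemma delta_pos_above q : p0 < 3 * q - 8 / 5 -> Rbar_lt (Finite 0) (delta q).
Proof.
intros Hq; rewrite delta_eq by lra; simpl.
assert (Hexp : 1 + 5 / 8 * (3 * q - 8 / 5) < exp (ln_half_pi * (3 * q - 8 / 5))).
{ apply (gap_pos_iff _ _ ln_half_pi_pos ln_half_pi_lt); [lra|].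
  apply (gap_pos_above_root _ _ ln_half_pi_pos ln_half_pi_lt p0); assumption. }
pose proof (exp_pos (ln_half_pi * (3 * q - 8 / 5))).
apply Rdiv_lt_0_compat; [lra|].
apply Rmult_lt_0_compat; [apply Rmult_lt_0_compat|]; lra.
Qed.

Lemma delta_neg_below q : 3 * q - 8 / 5 < p0 -> Rbar_lt (delta q) (Finite 0).
Proof.
intros Hq.
destruct (Rle_dec q 0) as [Hq0|Hq0].
{ unfold delta; destruct (Rle_dec q 0); [exact I|contradiction]. }
pose proof (exp_pos (ln_half_pi * (3 * q - 8 / 5))).
destruct (Rtotal_order (3 * q - 8 / 5) 0) as [Hp|[Hp|Hp]].
- rewrite delta_eq by lra; simpl.
  assert (Hexp : 1 + 5 / 8 * (3 * q - 8 / 5) < exp (ln_half_pi * (3 * q - 8 / 5))).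
  { apply (gap_pos_iff _ _ ln_half_pi_pos ln_half_pi_lt); [lra|].
    apply (gap_pos_of_neg _ _ ln_half_pi_pos ln_half_pi_lt); lra. }
  apply Rdiv_pos_neg; [lra|].
  assert (0 < exp (ln_half_pi * (3 * q - 8 / 5)) * (3 * q)) by (apply Rmult_lt_0_compat; lra).
  nra.
- replace q with (8 / 15) by lra; rewrite delta_8_15; simpl.
  pose proof ln_half_pi_lt; lra.
- rewrite delta_eq by lra; simpl.
  assert (Hexp : exp (ln_half_pi * (3 * q - 8 / 5)) < 1 + 5 / 8 * (3 * q - 8 / 5)).
  { apply (gap_neg_iff _ _ ln_half_pi_pos ln_half_pi_lt); [lra|].
    apply (gap_neg_below_root _ _ ln_half_pi_pos ln_half_pi_lt p0); auto; lra. }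
  apply Rdiv_neg_pos; [lra|].
  apply Rmult_lt_0_compat; [apply Rmult_lt_0_compat|]; lra.
Qed.

End DeltaSign.

Lemma sign_change_le (f : R -> Rbar) x y :
  (forall q, q > x -> Rbar_lt (Finite 0) (f q)) ->
  (forall q, q < y -> Rbar_lt (f q) (Finite 0)) ->
  y <= x.
Proof.
intros Hpos Hneg; apply Rnot_lt_le; intros Hxy.
specialize (Hpos ((x + y) / 2) ltac:(lra)); specialize (Hneg ((x + y) / 2) ltac:(lra)).
destruct (f ((x + y) / 2)); simpl in *; lra.
Qed.

Theorem lemma10 :
  exists! q0 : R,
    (forall q : R, q > q0 -> Rbar_lt (Finite 0) (delta q)) /\
    (forall q : R, q < q0 -> Rbar_lt (delta q) (Finite 0)) /\
    9896805 / 10000000 <= q0 < 9896815 / 10000000.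
Proof.
destruct gap_half_pi_root as [p0 [Hp0 Hroot]].
assert (Habove : forall q, q > (p0 + 8 / 5) / 3 -> Rbar_lt (Finite 0) (delta q))
  by (intros q Hq; apply (delta_pos_above p0); lra).
assert (Hbelow : forall q, q < (p0 + 8 / 5) / 3 -> Rbar_lt (delta q) (Finite 0))
  by (intros q Hq; apply (delta_neg_below p0); lra).
exists ((p0 + 8 / 5) / 3); split.
- repeat split; auto; lra.
- intros q0 [Habove0 [Hbelow0 _]].
  apply Rle_antisym; eapply sign_change_le; eassumption.
Qed.
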